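(* Let $\wedge$ be any T-norm. If ${\mathcal R}_A$ is a similarity relation (with respect to $\wedge$) on the alphabet $\mathcal{F}\cup\mathcal{V}$ satisfying the conditions in the context, then the fuzzy relation ${\mathcal R}$ on terms induced by ${\mathcal R}_A$ and $\wedge$ is a similarity relation on terms.
   Context: Simple types are generated by $\tau ::= \delta \mid \tau\to\tau$ over basic types $\delta$. There are disjoint countably infinite sets $\mathcal{V}$ of typed variables and $\mathcal{F}$ of typed constants. Terms are simply typed $\lambda$-terms $t ::= x \mid c \mid \lambda x.t \mid (t_1\,t_2)$ considered modulo $\alpha\beta\eta$; $t\updownarrow_\beta^\eta$ denotes the $\eta$-long $\beta$-normal form. A T-norm $\wedge$ is an associative, commutative, non-decreasing binary operation on $[0,1]$ with unit $1$. A fuzzy relation on a set $S$ is a map $S\times S\to[0,1]$; it is a similarity relation if it is reflexive (${\mathcal R}(s,s)=1$ for all $s$), symmetric, and $\wedge$-transitive (${\mathcal R}(s_1,s_2)\ge {\mathcal R}(s_1,s)\wedge{\mathcal R}(s,s_2)$ for all $s_1,s_2,s$). The fuzzy relation ${\mathcal R}_A$ on $\mathcal{F}\cup\mathcal{V}$ satisfies: ${\mathcal R}_A(x,y)=0$ for distinct variables $x,y$; ${\mathcal R}_A(f,g)=0$ for constants $f,g$ of different types; ${\mathcal R}_A(x,f)={\mathcal R}_A(f,x)=0$ for a variable $x$ and a constant $f$. The induced relation ${\mathcal R}$ on terms is defined, for terms in $\eta$-long $\beta$-normal form, by ${\mathcal R}(a,b)={\mathcal R}_A(a,b)$ for $a,b\in\mathcal{F}\cup\mathcal{V}$;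 ${\mathcal R}((t_1\,s_1),(t_2\,s_2))={\mathcal R}(t_1,t_2)\wedge{\mathcal R}(s_1,s_2)$; ${\mathcal R}(\lambda x.t,\lambda y.s)={\mathcal R}(t\{x\mapsto z\},s\{y\mapsto z\})$ where $x,y,z$ have the same type and $z$ is fresh; ${\mathcal R}(t,s)=0$ otherwise; and for arbitrary terms ${\mathcal R}(t,s)={\mathcal R}(t\updownarrow_\beta^\eta,s\updownarrow_\beta^\eta)$. *)

From HB Require Import structures.
From mathcomp Require Import all_boot all_order all_algebra.
From mathcomp Require Import reals.
Set Implicit Arguments. Unset Strict Implicit. Unset Printing Implicit Defensive.
Import Order.TTheory GRing.Theory Num.Theory.
Local Open Scope ring_scope.

Inductive sty (B : Type) := Base of B | Arr of sty B & sty B.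
Arguments Base {B}. Arguments Arr {B}.

Fixpoint sty_eqb (B : eqType) (a b : sty B) : bool :=
  match a, b with
  | Base x, Base y => x == y
  | Arr a1 a2, Arr b1 b2 => sty_eqb a1 b1 && sty_eqb a2 b2
  | _, _ => false
  end.

Lemma sty_eqP (B : eqType) : Equality.axiom (@sty_eqb B).
Proof.
elim=> [x|a1 IH1 a2 IH2] [y|b1 b2] /=; try by constructor.
- by apply: (iffP eqP) => [->|[]].
- apply: (iffP andP) => [[H1 H2]|[E1 E2]].
    + by move: (IH1 b1) (IH2 b2); rewrite H1 H2 => /= R1 R2; inversion R1; inversion R2; subst.
    + by subst; split; [case: (IH1 b1) | case: (IH2 b2)].
Qed.
HB.instance Definition _ (B : eqType) := hasDecEq.Build (sty B) (@sty_eqP B).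

(* A variable is a pair (name, type) : nat * sty B, so there are       *)
(* countably infinitely many variables of every type. Constants are    *)
(* elements of C, typed by ctype : C -> sty B.                         *)
Section Terms.
Variables (B C : eqType) (ctype : C -> sty B).

Inductive term :=
| Var of nat & sty B
| Cst of C
| Lam of nat & sty B & term
| App of term & term.

Inductive sym := SV of nat & sty B | SC of C.

Definition sym_eqb (a b : sym) : bool :=
  match a, b with
  | SV x A, SV y A' => (x == y) && (A == A')
  | SC c, SC d => c == d
  | _, _ => false
  end.

Definition sym_type (a : sym) : sty B :=
  match a with SV _ A => A | SC c => ctype c end.

Fixpoint typeof (t : term) : option (sty B) :=
  match t with
  | Var _ A => Some A
  | Cst c => Some (ctype c)
  | Lam _ A b => omap (Arr A) (typeof b)
  | App u s =>
      match typeof u, typeof s with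
      | Some (Arr A1 A2), Some A3 => if A1 == A3 then Some A2 else None
      | _, _ => None
      end
  end.

Definition is_base (o : option (sty B)) : bool :=
  if o is Some (Base _) then true else false.

(* t is a well-typed term in eta-long beta-normal form:
   t = \x1..xn. h u1 .. um  with h an atom (variable or constant), each ui
   in eta-long beta-normal form, and h u1 .. um of basic type.
   [neutral t]: t is h u1 .. um with the ui eta-long beta-normal. *)
Fixpoint lnf (t : term) : bool :=
  match t with
  | Lam _ _ b => lnf b
  | Var _ _ | Cst _ => is_base (typeof t)
  | App u s => is_base (typeof t) && neutral u && lnf s
  end
with neutral (t : term) : bool :=
  match t with
  | Var _ _ | Cst _ => true
  | App u s => neutral u && lnf s
  | Lam _ _ _ => false
  end.

Definition wt_lnf (t : term) : Prop := typeof t != None /\ lnf t.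

Fixpoint tsize (t : term) : nat :=
  match t with
  | Var _ _ | Cst _ => 1
  | Lam _ _ b => (tsize b).+1
  | App u s => (tsize u + tsize s).+1
  end.

Fixpoint maxname (t : term) : nat :=
  match t with
  | Var x _ => x
  | Cst _ => 0
  | Lam x _ b => maxn x (maxname b)
  | App u s => maxn (maxname u) (maxname s)
  end.

(* t{(x,A) |-> (z,A)} : replace the free occurrences of variable (x,A)
   by the variable (z,A); capture-free whenever z does not occur in t. *)
Fixpoint rename (x : nat) (A : sty B) (z : nat) (t : term) : term :=
  match t with
  | Var y A' => if (y == x) && (A' == A) then Var z A else t
  | Cst _ => t
  | Lam y A' b => if (y == x) && (A' == A) then t else Lam y A' (rename x A z b)
  | App u s => App (rename x A z u) (rename x A z s)
  end.

Definition atom_of (t : term) : option sym :=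
  match t with
  | Var x A => Some (SV x A)
  | Cst c => Some (SC c)
  | _ => None
  end.

End Terms.

Arguments Var {B C}. Arguments Cst {B C}. Arguments Lam {B C}. Arguments App {B C}.
Arguments SV {B C}. Arguments SC {B C}.

Definition in01 (R : realType) (x : R) : Prop := 0 <= x <= 1.

Definition tnorm (R : realType) (tn : R -> R -> R) : Prop :=
  [/\ (forall x y, in01 x -> in01 y -> in01 (tn x y)),
      (forall x y z, in01 x -> in01 y -> in01 z -> tn x (tn y z) = tn (tn x y) z),
      (forall x y, in01 x -> in01 y -> tn x y = tn y x),
      (forall x x' y y', in01 x -> in01 x' -> in01 y -> in01 y' ->
          x <= x' -> y <= y' -> tn x y <= tn x' y') &
      (forall x, in01 x -> tn x 1 = x)].

Definition fuzzy_rel (R : realType) (S : Type) (P : S -> Prop) (Rel : S -> S -> R) :=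
  forall s1 s2, P s1 -> P s2 -> in01 (Rel s1 s2).

Definition similarity (R : realType) (S : Type) (P : S -> Prop)
    (tn : R -> R -> R) (Rel : S -> S -> R) : Prop :=
  [/\ fuzzy_rel P Rel,
      (forall s, P s -> Rel s s = 1),
      (forall s1 s2, P s1 -> P s2 -> Rel s1 s2 = Rel s2 s1) &
      (forall s1 s2 s, P s1 -> P s2 -> P s ->
          tn (Rel s1 s) (Rel s s2) <= Rel s1 s2)].

Definition RA_conditions (R : realType) (B C : eqType) (ctype : C -> sty B)
    (RA : sym B C -> sym B C -> R) : Prop :=
  [/\ (forall x A y A', (x, A) != (y, A') -> RA (SV x A) (SV y A') = 0),
      (forall f g, ctype f != ctype g -> RA (SC f) (SC g) = 0),
      (forall x A f, RA (SV x A) (SC f) = 0) &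
      (forall x A f, RA (SC f) (SV x A) = 0)].

(* Defined by the structural clauses of the paper; the fuel n only     *)
(* serves to justify termination (renaming preserves size) and is      *)
(* always sufficient for n = max of the sizes.                         *)
Section Induced.
Variables (R : realType) (B C : eqType).
Variables (tn : R -> R -> R) (RA : sym B C -> sym B C -> R).

Fixpoint Rfuel (n : nat) (t s : term B C) : R :=
  match n with
  | 0 => 0
  | n'.+1 =>
    match atom_of t, atom_of s with
    | Some a, Some b => RA a b
    | _, _ =>
      match t, s with
      | App t1 s1, App t2 s2 => tn (Rfuel n' t1 t2) (Rfuel n' s1 s2)
      | Lam x A t1, Lam y A' s1 =>
          if A == A' then
            (* z : fresh variable of type A *)
            let z := (maxn (maxname t) (maxname s)).+1 in
            Rfuel n' (rename x A z t1) (rename y A' z s1)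
          else 0
      | _, _ => 0
      end
    end
  end.

Definition Rterm (t s : term B C) : R := Rfuel (maxn (tsize t) (tsize s)) t s.

End Induced.

From Pilot Require Import Defs.
From HB Require Import structures.
From mathcomp Require Import all_boot all_order all_algebra.
From mathcomp Require Import reals.
From mathcomp Require Import zify.
Set Implicit Arguments. Unset Strict Implicit. Unset Printing Implicit Defensive.
Import Order.TTheory GRing.Theory Num.Theory.
Local Open Scope ring_scope.

(* Transitivity is the delicate point: abstractions
   are compared after opening both binders with a variable fresh for the
   pair, and the pairs (t, u), (u, s) and (t, s) use different fresh
   variables.  So one first shows that the relation is invariant under every
   renaming of variables that is injective on the variables occurring in the
   two terms; this is where distinct variables, and a variable and a
   constant, must be R_A-unrelated.  Opening all three abstractions with one
   common fresh variable, transitivity then follows from the induction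
   hypothesis and the monotonicity, associativity and commutativity of the
   T-norm. *)

Section Renaming.
Variables (B C : eqType).
Implicit Types (t b c : term B C) (f g : nat -> sty B -> nat)
  (P Q : nat -> sty B -> bool).

Fixpoint map_names f t : term B C :=
  match t with
  | Var x A => Var (f x A) A
  | Cst c => Cst c
  | Lam x A b => Lam (f x A) A (map_names f b)
  | App u s => App (map_names f u) (map_names f s)
  end.

Fixpoint occurs (w : nat) (W : sty B) t : bool :=
  match t with
  | Var x A => (x == w) && (A == W)
  | Cst _ => false
  | Lam x A b => ((x == w) && (A == W)) || occurs w W b
  | App u s => occurs w W u || occurs w W s
  end.

Definition injective_on f P :=
  forall x y A, P x A -> P y A -> f x A = f y A -> x = y.

Lemma sub_injective_on f P Q :
  (forall w W, Q w W -> P w W) -> injective_on f P -> injective_on f Q.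
Proof. by move=> QP fP x y A /QP Px /QP Py; apply: fP. Qed.

Lemma tsize_map_names f t : Defs.tsize (map_names f t) = Defs.tsize t.
Proof. by elim: t => //= [x A b ->|u -> s ->]. Qed.

Lemma tsize_rename x A z t : Defs.tsize (rename x A z t) = Defs.tsize t.
Proof.
elim: t => [y A'|c|y A' b IH|u IHu s IHs] //=; first by case: ifP.
  by case: ifP => //= _; rewrite IH.
by rewrite IHu IHs.
Qed.

Lemma map_names_id t : map_names (fun w _ => w) t = t.
Proof. by elim: t => //= [x A b ->|u -> s ->]. Qed.

Lemma eq_map_names f g t :
  (forall w W, occurs w W t -> f w W = g w W) -> map_names f t = map_names g t.
Proof.
elim: t => [x A|c|x A b IH|u IHu s IHs] /= fg //.
- by rewrite fg //= !eqxx.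
- by rewrite fg /= ?eqxx // IH // => w W o; apply: fg; rewrite o orbT.
- by rewrite IHu ?IHs // => w W o; apply: fg; rewrite o ?orbT.
Qed.

Lemma occurs_maxname w W t : occurs w W t -> (w <= maxname t)%N.
Proof.
elim: t => [x A|c|x A b IH|u IHu s IHs] //=.
- by case/andP => /eqP ->.
- by case/orP => [/andP[/eqP -> _]|/IH]; lia.
- by case/orP => [/IHu|/IHs]; lia.
Qed.

Lemma occurs_map_names f w W t : occurs w W t -> occurs (f w W) W (map_names f t).
Proof.
elim: t => [x A|c|x A b IH|u IHu s IHs] //=.
- by case/andP => /eqP -> /eqP ->; rewrite !eqxx.
- by case/orP => [/andP[/eqP -> /eqP ->]|/IH ->]; rewrite ?eqxx ?orbT.
- by case/orP => [/IHu ->|/IHs ->]; rewrite ?orbT.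
Qed.

Lemma occurs_rename x A z w W t :
  occurs w W (rename x A z t) -> occurs w W t || ((w == z) && (W == A)).
Proof.
elim: t => [y A'|c|y A' b IH|u IHu s IHs] //=.
- case: ifP => _ /=; last by move->.
  by case/andP => /eqP -> /eqP ->; rewrite !eqxx orbT.
- case: ifP => _ /=; first by move->.
  by case/orP => [->//|/IH]; case/orP => ->; rewrite ?orbT.
- by case/orP => [/IHu|/IHs]; case/orP => ->; rewrite ?orbT.
Qed.

Lemma map_names_rename f x A z t :
  injective_on f (fun w W => occurs w W t || ((w == x) && (W == A))) ->
  map_names f (rename x A z t) = rename (f x A) A (f z A) (map_names f t).
Proof.
have fresh_head y A' P : injective_on f P -> P y A' -> P x A ->
    (y == x) && (A' == A) = false -> (f y A' == f x A) && (A' == A) = false.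
  move=> fP Py Px /negbT yx; apply/negbTE; apply: contra yx.
  by case/andP => /eqP fyx /eqP eA; subst A'; rewrite (fP _ _ _ Py Px fyx) !eqxx.
elim: t => [y A'|c|y A' b IH|u IHu s IHs] //= fP.
- case: ifP => [/andP[/eqP -> /eqP ->]|yx]; first by rewrite /= !eqxx.
  by rewrite /= (fresh_head _ _ _ fP) //= !eqxx ?orbT.
- case: ifP => [/andP[/eqP -> /eqP ->]|yx]; first by rewrite /= !eqxx.
  rewrite /= (fresh_head _ _ _ fP) //= ?eqxx ?orbT // IH //.
  by apply: sub_injective_on fP => w W /orP[] ->; rewrite ?orbT.
- by rewrite IHu ?IHs //; apply: sub_injective_on fP => w W /orP[] ->; rewrite ?orbT.
Qed.

End Renaming.

Section FreshExtension.
Variables (B C : eqType) (f : nat -> sty B -> nat) (P : nat -> sty B -> bool).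
Variables (z z' : nat) (A : sty B).
Hypothesis f_inj : injective_on f P.
Hypothesis P_lt_z : forall w W, P w W -> (w < z)%N.
Hypothesis fP_lt_z' : forall w W, P w W -> (f w W < z')%N.

Definition extend_names w W := if (w == z) && (W == A) then z' else f w W.

Lemma extend_names_new : extend_names z A = z'.
Proof. by rewrite /extend_names !eqxx. Qed.

Lemma extend_names_old w W : P w W -> extend_names w W = f w W.
Proof. by move=> /P_lt_z; rewrite /extend_names; case: eqP => // -> /[!ltnn]. Qed.

Lemma injective_on_extend_names :
  injective_on extend_names (fun w W => P w W || ((w == z) && (W == A))).
Proof.
move=> u v W /orP[Pu|/andP[/eqP-> /eqP->]] /orP[Pv|/andP[/eqP-> /eqP WA]] //.
- by rewrite !extend_names_old //; apply: f_inj.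
- subst W; rewrite extend_names_old // extend_names_new => fu.
  by move: (fP_lt_z' Pu); rewrite fu ltnn.
- rewrite extend_names_new extend_names_old // => fv.
  by move: (fP_lt_z' Pv); rewrite -fv ltnn.
Qed.

Lemma map_names_open x (b : term B C) :
  (forall w W, occurs w W (Lam x A b) -> P w W) ->
  map_names extend_names (rename x A z b) = rename (f x A) A z' (map_names f b).
Proof.
move=> bP; rewrite map_names_rename; last first.
  apply: sub_injective_on injective_on_extend_names => w W.
  by case/orP => [o|/andP[/eqP-> /eqP->]]; rewrite bP //= ?o ?eqxx ?orbT.
rewrite extend_names_new extend_names_old ?bP //= ?eqxx //.
congr rename; apply: eq_map_names => w W o.
by rewrite extend_names_old // bP //= o orbT.
Qed.

End FreshExtension.

Section OpenPair.
Variables (B C : eqType) (T : Type) (F : term B C -> term B C -> T).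
Hypothesis F_map_names : forall g t s,
  injective_on g (fun w W => occurs w W t || occurs w W s) ->
  F (map_names g t) (map_names g s) = F t s.

Lemma F_open_map_names f x y A b c z z' :
  let P w W := occurs w W (Lam x A b) || occurs w W (Lam y A c) in
  injective_on f P ->
  (maxname (Lam x A b) < z)%N -> (maxname (Lam y A c) < z)%N ->
  (maxname (map_names f (Lam x A b)) < z')%N ->
  (maxname (map_names f (Lam y A c)) < z')%N ->
  F (rename (f x A) A z' (map_names f b)) (rename (f y A) A z' (map_names f c)) =
  F (rename x A z b) (rename y A z c).
Proof.
move=> P f_inj bz cz fbz' fcz'.
have P_lt_z w W : P w W -> (w < z)%N.
  by case/orP => /occurs_maxname; lia.
have fP_lt_z' w W : P w W -> (f w W < z')%N.
  by case/orP => /(occurs_map_names f) /occurs_maxname; lia.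
have bP w W : occurs w W (Lam x A b) -> P w W by rewrite /P => ->.
have cP w W : occurs w W (Lam y A c) -> P w W by rewrite /P orbC => ->.
(* Extending f by z |-> z' turns both bodies opened with z into the bodies
   opened with z', and stays injective on the names of the former. *)
rewrite -!(map_names_open f_inj P_lt_z fP_lt_z') // F_map_names //.
apply: sub_injective_on (injective_on_extend_names f_inj P_lt_z fP_lt_z') => w W.
case/orP => /occurs_rename /orP[o|->]; rewrite ?orbT //.
  by rewrite bP //= o orbT.
by rewrite cP //= o orbT.
Qed.

End OpenPair.

Lemma in01_0 (R : realType) : in01 (0 : R).
Proof. by rewrite /in01 lexx ler01. Qed.

Lemma in01_1 (R : realType) : in01 (1 : R).
Proof. by rewrite /in01 lexx ler01. Qed.

Section TNorm.
Variables (R : realType) (tn : R -> R -> R).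
Hypothesis tn_tnorm : tnorm tn.

Lemma tnorm_in01 x y : in01 x -> in01 y -> in01 (tn x y).
Proof. by case: tn_tnorm => H _ _ _ _; apply: H. Qed.

Lemma tnormA x y z : in01 x -> in01 y -> in01 z -> tn x (tn y z) = tn (tn x y) z.
Proof. by case: tn_tnorm => _ H _ _ _; apply: H. Qed.

Lemma tnormC x y : in01 x -> in01 y -> tn x y = tn y x.
Proof. by case: tn_tnorm => _ _ H _ _; apply: H. Qed.

Lemma le_tnorm x x' y y' : in01 x -> in01 x' -> in01 y -> in01 y' ->
  x <= x' -> y <= y' -> tn x y <= tn x' y'.
Proof. by case: tn_tnorm => _ _ _ H _; apply: H. Qed.

Lemma tnorm1 x : in01 x -> tn x 1 = x.
Proof. by case: tn_tnorm => _ _ _ _ H; apply: H. Qed.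

Lemma tnorm0l y : in01 y -> tn 0 y = 0.
Proof.
move=> y01; have z01 := in01_0 R; have o01 := in01_1 R.
apply/eqP; rewrite eq_le; case/andP: (tnorm_in01 z01 y01) => -> _.
rewrite andbT -[leRHS](tnorm1 z01).
by apply: le_tnorm => //; case/andP: y01.
Qed.

Lemma tnorm0r x : in01 x -> tn x 0 = 0.
Proof. by move=> x01; rewrite tnormC ?tnorm0l //; exact: in01_0. Qed.

Lemma tnormACA x y z t : in01 x -> in01 y -> in01 z -> in01 t ->
  tn (tn x y) (tn z t) = tn (tn x z) (tn y t).
Proof.
move=> x01 y01 z01 t01.
rewrite -(tnormA x01 y01 (tnorm_in01 z01 t01)) (tnormA y01 z01 t01) (tnormC y01 z01).
by rewrite -(tnormA z01 y01 t01) (tnormA x01 z01 (tnorm_in01 y01 t01)).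
Qed.

Section InducedSimilarity.
Variables (B C : eqType) (ctype : C -> sty B) (RA : sym B C -> sym B C -> R).
Hypothesis RA_similarity : similarity (fun _ => True) tn RA.
Hypothesis RA_cond : RA_conditions ctype RA.

Local Notation Rf := (Rfuel tn RA).

Lemma RA_in01 a b : in01 (RA a b).
Proof. by case: RA_similarity => H _ _ _; apply: H. Qed.

Lemma RA_refl a : RA a a = 1.
Proof. by case: RA_similarity => _ H _ _; apply: H. Qed.

Lemma RA_sym a b : RA a b = RA b a.
Proof. by case: RA_similarity => _ _ H _; apply: H. Qed.

Lemma RA_trans a b c : tn (RA a c) (RA c b) <= RA a b.
Proof. by case: RA_similarity => _ _ _ H; apply: H. Qed.

Lemma RA_SV x A y A' :
  RA (SV x A) (SV y A') = if (x == y) && (A == A') then 1 else 0.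
Proof.
case: ifP => [/andP[/eqP-> /eqP->]|xy]; first exact: RA_refl.
by case: RA_cond => -> //; apply: contraFN xy => /eqP[-> ->]; rewrite !eqxx.
Qed.

Lemma Rfuel_in01 n t s : in01 (Rf n t s).
Proof.
elim: n t s => [|n IH] t s; first exact: in01_0.
case: t => [x A|c|x A b|u1 u2]; case: s => [y A'|d|y A' b'|v1 v2] /=;
  try exact: RA_in01; try exact: in01_0; try (apply: tnorm_in01; exact: IH).
by case: ifP => _; [exact: IH|exact: in01_0].
Qed.

Lemma Rfuel_map_names n f t s :
  injective_on f (fun w W => occurs w W t || occurs w W s) ->
  Rf n (map_names f t) (map_names f s) = Rf n t s.
Proof.
elim: n f t s => [//|n IH] f [x A|c|x A b|u1 u2] [y A'|d|y A' b'|v1 v2] f_inj //=.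
- rewrite !RA_SV; case: (eqVneq A A') => [eA|]; last by rewrite !andbF.
  subst A'; rewrite !andbT; case: (eqVneq x y) => [->|xy]; first by rewrite eqxx.
  by case: eqP => // fxy; case/eqP: xy; apply: f_inj fxy; rewrite /= !eqxx ?orbT.
- by case: RA_cond => _ _ -> _; case: RA_cond => _ _ -> _.
- by case: RA_cond => _ _ _ ->; case: RA_cond => _ _ _ ->.
- case: eqP => // eA; subst A'.
  by apply: (F_open_map_names IH) => //=; lia.
- congr tn; apply: IH; apply: sub_injective_on f_inj => w W /=.
  + by case/orP => ->; rewrite ?orbT.
  + by case/orP => ->; rewrite ?orbT.
Qed.

Lemma Rfuel_open_fresh n x y A b c z z' :
  (maxname (Lam x A b) < z)%N -> (maxname (Lam y A c) < z)%N ->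
  (maxname (Lam x A b) < z')%N -> (maxname (Lam y A c) < z')%N ->
  Rf n (rename x A z' b) (rename y A z' c) = Rf n (rename x A z b) (rename y A z c).
Proof.
move=> bz cz bz' cz'.
have := @F_open_map_names _ _ _ (Rf n) (@Rfuel_map_names n) (fun w _ => w) x y A b c z z'.
by rewrite !map_names_id; apply.
Qed.

Lemma Rfuel_sufficient n k t s : (maxn (Defs.tsize t) (Defs.tsize s) <= n)%N ->
  Rf (n + k) t s = Rf n t s.
Proof.
elim: n k t s => [|n IH] k t s; first by case: t => /=; lia.
case: t => [x A|c|x A b|u1 u2]; case: s => [y A'|d|y A' b'|v1 v2] //= size_le.
- by case: eqP => // _; apply: IH; rewrite !tsize_rename; lia.
- by rewrite !IH //; lia.
Qed.

Lemma Rfuel_refl n t : (Defs.tsize t <= n)%N -> Rf n t t = 1.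
Proof.
elim: n t => [|n IH] t; first by case: t.
case: t => [x A|c|x A b|u1 u2] /= size_le; rewrite ?RA_refl //.
- by rewrite eqxx IH // tsize_rename.
- by rewrite !IH ?tnorm1 //; [exact: in01_1|lia|lia].
Qed.

Lemma Rfuel_sym n t s : Rf n t s = Rf n s t.
Proof.
elim: n t s => [//|n IH] t s.
case: t => [x A|c|x A b|u1 u2]; case: s => [y A'|d|y A' b'|v1 v2] //=;
  try exact: RA_sym.
- by rewrite eq_sym maxnC; case: eqP => // ->; rewrite IH.
- by rewrite (IH u1) (IH u2).
Qed.

Lemma Rfuel_trans n t u s :
  (maxn (Defs.tsize t) (maxn (Defs.tsize u) (Defs.tsize s)) <= n)%N ->
  tn (Rf n t u) (Rf n u s) <= Rf n t s.
Proof.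
elim: n t u s => [|n IH] t u s; first by case: t; rewrite /=; lia.
move=> size_le.
have ts01 := Rfuel_in01 n.+1 t s; have tu01 := Rfuel_in01 n.+1 t u.
have us01 := Rfuel_in01 n.+1 u s.
case: t u s size_le ts01 tu01 us01 => [x A|c|x A b|t1 t2] [y A'|d|y A' b'|u1 u2]
  [w A''|e|w A'' b''|s1 s2] /= size_le ts01 tu01 us01;
  (* whenever the three terms are not all atoms, all abstractions or all
     applications, one factor vanishes *)
  rewrite ?RA_trans ?tnorm0l ?tnorm0r //; try by case/andP: ts01.
- case: (eqVneq A A') => [eA|_]; last first.
    by rewrite tnorm0l //; case/andP: ts01.
  case: (eqVneq A' A'') => [eA'|_]; last first.
    by rewrite tnorm0r; [case/andP: ts01|exact: Rfuel_in01].
  subst A' A''; rewrite eqxx.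
  pose z := (maxn (maxname (Lam x A b))
              (maxn (maxname (Lam y A b')) (maxname (Lam w A b'')))).+1.
  rewrite (@Rfuel_open_fresh n x y A b b' z) ?(@Rfuel_open_fresh n y w A b' b'' z)
    ?(@Rfuel_open_fresh n x w A b b'' z) /z /=; try lia.
  by apply: IH; rewrite !tsize_rename; lia.
- rewrite tnormACA; try exact: Rfuel_in01.
  by apply: le_tnorm; try apply: tnorm_in01; try apply: Rfuel_in01; apply: IH; lia.
Qed.

Lemma Rterm_Rfuel n t s : (maxn (Defs.tsize t) (Defs.tsize s) <= n)%N ->
  Rterm tn RA t s = Rf n t s.
Proof. by move=> size_le; rewrite /Rterm -(subnKC size_le) Rfuel_sufficient. Qed.

Lemma Rterm_similarity (P : term B C -> Prop) : similarity P tn (Rterm tn RA).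
Proof.
split=> [t s _ _|t _|t s _ _|t s u _ _ _]; first exact: Rfuel_in01.
- by rewrite /Rterm Rfuel_refl // maxnn.
- by rewrite /Rterm maxnC Rfuel_sym.
set N := maxn (Defs.tsize t) (maxn (Defs.tsize u) (Defs.tsize s)).
rewrite !(@Rterm_Rfuel N) ?Rfuel_trans //; lia.
Qed.

End InducedSimilarity.

End TNorm.

Theorem theorem1 (R : realType) (B C : countType) (ctype : C -> sty B)
    (C_infinite : forall s : seq C, exists c : C, c \notin s)
    (tn : R -> R -> R) (RA : sym B C -> sym B C -> R) :
  tnorm tn ->
  similarity (fun _ : sym B C => True) tn RA ->
  RA_conditions ctype RA ->
  similarity (fun t : term B C => wt_lnf ctype t) tn (Rterm tn RA).
Proof.
move=> tn_tnorm RA_similarity RA_cond.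
exact: (Rterm_similarity tn_tnorm RA_similarity RA_cond).
Qed.
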